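(* Let $G$ be a group and $(\rho,V)$ a linear representation of $G$ on a finite-dimensional vector space $V$ over a field $k$. Let $Y$ be a $k$-subspace of $V$ and set \[\mu=\inf_{A\in\mathcal{P}_{\mathrm{fin}}(G)\setminus\{\emptyset\}}\frac{\dim(A\cdot Y)}{|A|}.\] Then either $\mu=0$, or for every $\lambda\in[0,\mu]$ there exists a finite subgroup $H$ of $G$ containing $G_Y$ such that \[\dim(A\cdot Y)\geq\lambda|A|+\dim(H\cdot Y)-\lambda|H|\geq\lambda|A|+\dim(Y)-\lambda|H|\] for every nonempty finite subset $A$ of $G$.
   Context: $g\cdot v=\rho(g)v$. For $A\subset G$, $A\cdot Y$ denotes the $k$-subspace spanned by $\{a\cdot v\mid a\in A,v\in Y\}$, and $\dim(A\cdot Y)$ its dimension. $G_Y=\{g\in G\mid g\cdot Y=Y\}$. $\mathcal{P}_{\mathrm{fin}}(G)$ is the set of finite subsets of $G$. *)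

From HB Require Import structures.
From mathcomp Require Import all_boot all_order all_algebra.
From mathcomp Require Import finmap.
From mathcomp Require Import classical_sets reals.
Set Implicit Arguments. Unset Strict Implicit. Unset Printing Implicit Defensive.
Import Order.TTheory GRing.Theory Num.Theory.

Local Open Scope fset_scope.

Definition is_representation (G : groupType) (k : fieldType) (V : vectType k)
    (rho : G -> 'End(V)) : Prop :=
  rho 1%g = \1%VF /\ forall g h : G, rho (g * h)%g = (rho g \o rho h)%VF.

Definition act_span (G : groupType) (k : fieldType) (V : vectType k)
    (rho : G -> 'End(V)) (A : {fset G}) (Y : {vspace V}) : {vspace V} :=
  (\sum_(a <- A) (rho a @: Y))%VS.

Definition setwise_stab (G : groupType) (k : fieldType) (V : vectType k)
    (rho : G -> 'End(V)) (Y : {vspace V}) : set G :=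
  [set g | (rho g @: Y)%VS = Y]%classic.

Definition is_fin_subgroup (G : groupType) (H : {fset G}) : Prop :=
  1%g \in H /\ (forall x y, x \in H -> y \in H -> (x * y)%g \in H)
  /\ (forall x, x \in H -> (x^-1)%g \in H).

Definition mu_inf (R : realType) (G : groupType) (k : fieldType) (V : vectType k)
    (rho : G -> 'End(V)) (Y : {vspace V}) : R :=
  inf [set ((\dim (act_span rho A Y))%:R / (#|` A|)%:R : R)%R
      | A in [set A : {fset G} | A != fset0]]%classic.

(* If G is infinite, mu = 0: every A . Y lies in V, so mu |A| <= dim V for
   arbitrarily large A.  If G is finite, fix lam >= 0 and consider the defect f A = dim (A . Y) - lam |A|.  It is
   submodular, by the dimension formula for A . Y + B . Y, and invariant under
   left translation, so the minimisers of f are closed under unions of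
   intersecting sets.  The largest minimiser H containing 1 then contains each
   translate x^-1 H with x in H, hence is a subgroup; and for g in G_Y the set
   H :|: H g spans no more than H, so it is again a minimiser and g lies in H.
   The two inequalities are f A >= f H and dim (H . Y) >= dim Y. *)

From HB Require Import structures.
From mathcomp Require Import all_boot all_order all_algebra.
From mathcomp Require Import finmap.
From mathcomp Require Import classical_sets reals boolp.
From mathcomp Require Import lra.
Import Order.TTheory GRing.Theory Num.Theory.
Set Implicit Arguments. Unset Strict Implicit. Unset Printing Implicit Defensive.
Local Open Scope fset_scope.
Local Open Scope ring_scope.

Lemma seq_argmin (T : eqType) disp (O : orderType disp) (F : T -> O) (s : seq T) x0 :
  x0 \in s -> exists2 x, x \in s & forall y, y \in s -> (F x <= F y)%O.
Proof.
case: s => // a s _; elim: s a => [|b s IH] a.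
  by exists a => [|y]; rewrite ?mem_seq1 // => /eqP ->.
have [x xs xmin] := IH b; have [Fax|Fxa] := leP (F a) (F x).
  exists a => [|y]; first exact: mem_head.
  by rewrite in_cons => /predU1P [-> // | /xmin]; apply: le_trans.
exists x => [|y]; first by rewrite in_cons xs orbT.
by rewrite in_cons => /predU1P [-> | /xmin //]; apply: ltW.
Qed.

Lemma subv_sum_seqP (K : fieldType) (vT : vectType K) (I : eqType) (r : seq I)
    (Us : I -> {vspace vT}) (U : {vspace vT}) :
  reflect (forall i, i \in r -> (Us i <= U)%VS) (\sum_(i <- r) Us i <= U)%VS.
Proof.
suff -> : (\sum_(i <- r) Us i <= U)%VS = all (fun i => Us i <= U)%VS r by exact: allP.
by elim: r => [|i r IH]; rewrite ?big_nil ?sub0v // big_cons subv_add IH.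
Qed.

Definition ltranslate (G : groupType) (g : G) (A : {fset G}) : {fset G} :=
  [fset (g * a)%g | a in A].

Section LeftTranslates.
Variable G : groupType.
Implicit Types (g x : G) (A : {fset G}).

Lemma card_ltranslate g A : #|` ltranslate g A| = #|` A|.
Proof. by rewrite card_imfset //=; apply: mulgI. Qed.

Lemma mem_ltranslate g A x : ((g * x)%g \in ltranslate g A) = (x \in A).
Proof. by apply/imfsetP/idP => [[y yA /mulgI ->] // | xA]; exists x. Qed.

Lemma ltranslateK g : cancel (ltranslate g) (ltranslate g^-1).
Proof.
move=> A; apply/fsetP => x.
by rewrite -[X in X \in _](mulKg g x) !mem_ltranslate.
Qed.

End LeftTranslates.

Section ActSpan.
Variables (G : groupType) (k : fieldType) (V : vectType k).
Variables (rho : G -> 'End(V)) (Y : {vspace V}).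
Implicit Types (g : G) (A B : {fset G}).

Lemma act_span_subP A (U : {vspace V}) :
  reflect (forall a, a \in A -> (rho a @: Y <= U)%VS) (act_span rho A Y <= U)%VS.
Proof. exact: subv_sum_seqP. Qed.

Lemma act_span_sup A a : a \in A -> (rho a @: Y <= act_span rho A Y)%VS.
Proof. by move=> aA; apply: (act_span_subP _ _ (subvv _)). Qed.

Lemma act_spanS A B : A `<=` B -> (act_span rho A Y <= act_span rho B Y)%VS.
Proof. by move=> /fsubsetP sAB; apply/act_span_subP => a /sAB; apply: act_span_sup. Qed.

Lemma act_spanU A B :
  act_span rho (A `|` B) Y = (act_span rho A Y + act_span rho B Y)%VS.
Proof.
apply/eqP; rewrite eqEsubv subv_add !act_spanS ?fsubsetUl ?fsubsetUr //= andbT.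
apply/act_span_subP => a /fsetUP [aA | aB].
  exact/(subv_trans (act_span_sup aA))/addvSl.
exact/(subv_trans (act_span_sup aB))/addvSr.
Qed.

Lemma dim_act_span_submod A B :
  (\dim (act_span rho (A `|` B) Y) + \dim (act_span rho (A `&` B) Y)
    <= \dim (act_span rho A Y) + \dim (act_span rho B Y))%N.
Proof.
rewrite act_spanU -[leqRHS]dimv_sum_cap leq_add2l dimvS // subv_cap.
by rewrite !act_spanS ?fsubsetIl ?fsubsetIr.
Qed.

Hypothesis rhoR : is_representation rho.

Lemma act_span_rtranslate_stab A g : setwise_stab rho Y g ->
  (act_span rho [fset (a * g)%g | a in A] Y <= act_span rho A Y)%VS.
Proof.
case: rhoR => _ rhoM gY; apply/act_span_subP => _ /imfsetP [a aA ->].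
by rewrite rhoM limg_comp gY act_span_sup.
Qed.

Lemma dim_act_span_ge A : 1%g \in A -> (\dim Y <= \dim (act_span rho A Y))%N.
Proof. by case: rhoR => rho1 _ A1; rewrite dimvS // -{1}[Y]lim1g -rho1 act_span_sup. Qed.

Lemma act_span_ltranslate g A :
  (act_span rho (ltranslate g A) Y <= rho g @: act_span rho A Y)%VS.
Proof.
case: rhoR => _ rhoM; apply/act_span_subP => _ /imfsetP [a aA ->].
by rewrite rhoM limg_comp limgS // act_span_sup.
Qed.

Lemma dim_act_span_ltranslate g A :
  \dim (act_span rho (ltranslate g A) Y) = \dim (act_span rho A Y).
Proof.
suff dim_le h B : (\dim (act_span rho (ltranslate h B) Y) <= \dim (act_span rho B Y))%N.
  by apply/eqP; rewrite eqn_leq dim_le /= -{1}(ltranslateK g A) dim_le.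
apply: leq_trans (dimvS (act_span_ltranslate h B)) _.
by rewrite -[leqRHS](limg_ker_dim (rho h)) leq_addl.
Qed.

End ActSpan.

Section Defect.
Variables (R : realDomainType) (G : groupType) (k : fieldType) (V : vectType k).
Variables (rho : G -> 'End(V)) (Y : {vspace V}) (lam : R).
Implicit Types (g x y : G) (A B C : {fset G}).

Definition defect A : R := (\dim (act_span rho A Y))%:R - lam * #|` A|%:R.

Lemma defect_submod A B :
  defect (A `|` B) + defect (A `&` B) <= defect A + defect B.
Proof.
have dim_le := dim_act_span_submod rho Y A B.
rewrite -(ler_nat R) !natrD in dim_le.
have card_eq := congr1 (fun n : nat => lam * n%:R) (cardfsUI A B).
rewrite /= !natrD !mulrDr in card_eq.
rewrite /defect; lra.
Qed.

Lemma defect_ltranslate g A :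
  is_representation rho -> defect (ltranslate g A) = defect A.
Proof. by move=> rhoR; rewrite /defect dim_act_span_ltranslate // card_ltranslate. Qed.

Lemma defect_superset A B : 0 <= lam -> A `<=` B ->
  (act_span rho B Y <= act_span rho A Y)%VS -> defect B <= defect A.
Proof.
move=> lam_ge0 sAB sBA; rewrite /defect lerB ?ler_nat ?dimvS //.
by rewrite ler_wpM2l // ler_nat fsubset_leq_card.
Qed.

Section Minimizers.
Variable m : R.
Hypothesis defect_ge : forall C, C != fset0 -> m <= defect C.

Lemma defect_min_setU A B :
  defect A = m -> defect B = m -> A `&` B != fset0 -> defect (A `|` B) = m.
Proof.
move=> dA dB /[dup] AB0 /fset0Pn [x /fsetIP [xA _]].
have AuB0 : A `|` B != fset0 by apply/fset0Pn; exists x; rewrite in_fsetU xA.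
have := defect_submod A B; have := defect_ge AB0; have := defect_ge AuB0.
lra.
Qed.

Hypothesis rhoR : is_representation rho.
Variable M : {fset G}.
Hypotheses (M1 : 1%g \in M) (defectM : defect M = m).
Hypothesis M_max : forall B, 1%g \in B -> defect B = m -> B `<=` M.

Lemma ltranslate_inv_sub x : x \in M -> ltranslate x^-1 M `<=` M.
Proof.
move=> xM; apply: M_max; last by rewrite defect_ltranslate.
by rewrite -(mulVg x) mem_ltranslate.
Qed.

Lemma maximal_minimizer_subgroup : is_fin_subgroup M.
Proof.
have divM x y : x \in M -> y \in M -> (x^-1 * y)%g \in M.
  by move=> xM yM; apply: (fsubsetP (ltranslate_inv_sub xM)); rewrite mem_ltranslate.
have invM x : x \in M -> x^-1%g \in M by move=> xM; rewrite -[x^-1%g]mulg1 divM.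
split=> //; split=> [x y xM yM|]; last exact: invM.
by rewrite -[x]invgK divM ?invM.
Qed.

Lemma setwise_stab_sub_maximal_minimizer g :
  0 <= lam -> setwise_stab rho Y g -> g \in M.
Proof.
move=> lam_ge0 gY; pose Mg := M `|` [fset (x * g)%g | x in M].
suff /fsubsetP sMgM : Mg `<=` M.
  by apply/sMgM/fsetUP; right; apply/imfsetP; exists 1%g; rewrite ?mul1g.
have Mg1 : 1%g \in Mg by rewrite in_fsetU M1.
apply: M_max => //; apply/eqP; rewrite eq_le defect_ge ?andbT; last first.
  by apply/fset0Pn; exists 1%g.
rewrite -defectM defect_superset ?fsubsetUl // act_spanU subv_add subvv /=.
exact: act_span_rtranslate_stab.
Qed.

End Minimizers.
End Defect.

Section FiniteGroup.
Variables (R : realDomainType) (G : groupType) (k : fieldType) (V : vectType k).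
Variables (rho : G -> 'End(V)) (Y : {vspace V}) (lam : R).
Hypothesis rhoR : is_representation rho.
Variable E : {fset G}.
Hypothesis memE : forall g, g \in E.
Local Notation defect := (defect rho Y lam).

Lemma mem_fpowerset_full (A : {fset G}) : A \in fpowerset E.
Proof. by rewrite fpowersetE; apply/fsubsetP => x _; apply: memE. Qed.

Lemma exists_min_defect : exists2 A0 : {fset G}, A0 != fset0 &
  forall C, C != fset0 -> defect A0 <= defect C.
Proof.
have [|A0] := seq_argmin defect (x0 := [fset 1%g])
    (s := [seq C <- fpowerset E | C != fset0]).
  by rewrite mem_filter -cardfs_gt0 cardfs1 mem_fpowerset_full.
rewrite mem_filter => /andP [A0ne _] A0min; exists A0 => // C Cne.
by apply: A0min; rewrite mem_filter Cne mem_fpowerset_full.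
Qed.

Lemma exists_maximal_minimizer (m : R) (A0 : {fset G}) :
  (forall C, C != fset0 -> m <= defect C) -> A0 != fset0 -> defect A0 = m ->
  exists M, [/\ 1%g \in M, defect M = m &
    forall B, 1%g \in B -> defect B = m -> B `<=` M].
Proof.
move=> defect_ge /fset0Pn [a aA0] dA0.
pose S := [seq B <- fpowerset E | (1%g \in B) && (defect B == m)].
have [|M] := seq_argmin (fun B : {fset G} => - (#|` B|%:R) : R)
    (x0 := ltranslate a^-1 A0) (s := S).
  by rewrite mem_filter mem_fpowerset_full -(mulVg a) mem_ltranslate aA0
    defect_ltranslate // dA0 eqxx.
rewrite mem_filter => /andP [/andP [M1 /eqP dM] _] Mmax.
exists M; split=> // B B1 dB.
have BM1 : 1%g \in B `|` M by rewrite in_fsetU B1.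
have dBM : defect (B `|` M) = m.
  by apply: defect_min_setU => //; apply/fset0Pn; exists 1%g; rewrite in_fsetI B1.
have := Mmax (B `|` M); rewrite mem_filter BM1 dBM eqxx mem_fpowerset_full.
rewrite lerN2 ler_nat => /(_ isT) card_le.
have /eqP -> : M == B `|` M by rewrite eqEfcard fsubsetUr card_le.
exact: fsubsetUl.
Qed.

Lemma min_defect_subgroup : 0 <= lam ->
  exists H : {fset G}, [/\ is_fin_subgroup H,
    forall g, setwise_stab rho Y g -> g \in H, 1%g \in H &
    forall A, A != fset0 -> defect H <= defect A].
Proof.
move=> lam_ge0; have [A0 A0ne A0min] := exists_min_defect.
have [M [M1 dM Mmax]] := exists_maximal_minimizer A0min A0ne erefl.
exists M; split=> //; last by rewrite dM.
- exact: (maximal_minimizer_subgroup rhoR M1 dM Mmax).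
- by move=> g; apply: (setwise_stab_sub_maximal_minimizer A0min rhoR M1 dM Mmax).
Qed.

End FiniteGroup.

Lemma fset_of_card (T : choiceType) :
  (forall A : {fset T}, exists x, x \notin A) -> forall n, exists A : {fset T}, #|` A| = n.
Proof.
move=> fresh; elim=> [|n [A cardA]]; first by exists fset0; rewrite cardfs0.
by have [x xA] := fresh A; exists (x |` A); rewrite cardfsU1 xA cardA.
Qed.

Section MuInf.
Variables (R : realType) (G : groupType) (k : fieldType) (V : vectType k).
Variables (rho : G -> 'End(V)) (Y : {vspace V}).

Lemma mu_inf_le (A : {fset G}) : A != fset0 ->
  mu_inf R rho Y <= (\dim (act_span rho A Y))%:R / #|` A|%:R.
Proof.
move=> A0; apply: ge_inf; last by exists A.
by exists 0 => _ [B _ <-]; rewrite divr_ge0.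
Qed.

Lemma mu_inf_ge0 : 0 <= mu_inf R rho Y.
Proof.
apply: lb_le_inf; last by move=> _ [B _ <-]; rewrite divr_ge0.
by exists ((\dim (act_span rho [fset 1%g] Y))%:R / 1%:R), [fset 1%g];
  rewrite /= ?cardfs1 // -cardfs_gt0 cardfs1.
Qed.

Lemma mu_inf_eq0 : (forall A : {fset G}, exists g, g \notin A) -> mu_inf R rho Y = 0.
Proof.
move=> fresh; apply/eqP; rewrite eq_le mu_inf_ge0 andbT leNgt; apply/negP => mu_gt0.
pose d := \dim (fullv : {vspace V}).
have [A cardA] := fset_of_card fresh (Num.trunc (d%:R / mu_inf R rho Y)).+1.
have A0 : A != fset0 by rewrite -cardfs_gt0 cardA.
have := mu_inf_le A0; rewrite ler_pdivlMr ?ltr0n ?cardfs_gt0 // => mu_le.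
have : (\dim (act_span rho A Y))%:R <= d%:R :> R by rewrite ler_nat dimvS ?subvf.
have := truncnS_gt (d%:R / mu_inf R rho Y); rewrite ltr_pdivrMr // -cardA.
by rewrite [_ * mu_inf _ _ _]mulrC; lra.
Qed.

End MuInf.

Unset Implicit Arguments.

Theorem mainTheorem12 (R : realType) (G : groupType) (k : fieldType)
    (V : vectType k) (rho : G -> 'End(V)) (Y : {vspace V}) :
  is_representation rho ->
  mu_inf R rho Y = 0 \/
  (forall lam : R, 0 <= lam -> lam <= mu_inf R rho Y ->
    exists H : {fset G},
      is_fin_subgroup H /\
      (forall g, setwise_stab rho Y g -> g \in H) /\
      (forall A : {fset G}, A != fset0 ->
         ((\dim (act_span rho A Y))%:R
            >= lam * (#|` A|)%fset%:R + (\dim (act_span rho H Y))%:R - lam * (#|` H|)%fset%:R)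
         /\ (lam * (#|` A|)%fset%:R + (\dim (act_span rho H Y))%:R - lam * (#|` H|)%fset%:R
            >= lam * (#|` A|)%fset%:R + (\dim Y)%:R - lam * (#|` H|)%fset%:R))).
Proof.
move=> rhoR.
have [fresh | /existsNP [E /forallNP memE]] :=
  pselect (forall E : {fset G}, exists g, g \notin E).
  by left; apply: mu_inf_eq0.
have {}memE g : g \in E by apply/negPn/negP; apply: memE.
right=> lam lam_ge0 _.
have [H [subgroupH stabH H1 Hmin]] := min_defect_subgroup Y rhoR memE lam_ge0.
exists H; split=> //; split=> // A A0; split.
  by have := Hmin A A0; rewrite /defect; lra.
by have := dim_act_span_ge Y rhoR H1; rewrite -(ler_nat R); lra.
Qed.
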